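(* Let $(M,d)$ be a metric space and $Y\subseteq M$. Let $\mathcal{N}$ be a $\sigma$-algebra of subsets of $Y$ containing all Borel subsets of $Y$, and let $\nu$ be a measure on $\mathcal{N}$ such that $\nu(B(x,r)\cap Y)<+\infty$ for all $x\in Y$, $r>0$. Let $\upsilon_Y\in]0,+\infty[$ and assume that $Y$ is upper $\upsilon_Y$-Ahlfors regular with respect to $Y$, with constants $r_0\in]0,+\infty]$, $c_0$ as in the definition, and that $\nu(Y)<+\infty$ whenever $r_0<+\infty$. Let $s_1,s_2\in[0,\upsilon_Y[$ and $a\in]0,+\infty[$. Then there exists $c\in]0,+\infty[$ such that \[ \int_{Y\cap B(\xi,a\,d(x',x''))}\frac{d\nu(\eta)}{d(\xi,\eta)^{s_1}d(\eta,y)^{s_2}} \leq c\left(d(x',y)^{-s_2}d(x',x'')^{\upsilon_Y-s_1}+d(x',y)^{-s_1}d(x',x'')^{\upsilon_Y-s_2}\right) \] for all $x',x''\in Y$ with $x'\neq x''$, all $\xi\in\{x',x''\}$ and all $y\in Y\setminus B(x',2d(x',x''))$.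
   Context: For $\xi\in M$, $r>0$, $B(\xi,r)=\{\eta\in M: d(\xi,\eta)<r\}$. $Y$ is upper $\upsilon$-Ahlfors regular with respect to $Y$ if there exist $r_0\in]0,+\infty]$, $c_0\in]0,+\infty[$ with $\nu(B(x,r)\cap Y)\leq c_0r^{\upsilon}$ for all $x\in Y$, $r\in]0,r_0[$. *)

From HB Require Import structures.
From mathcomp Require Import all_boot all_order all_algebra.
From mathcomp Require Import all_classical all_reals all_analysis.
Set Implicit Arguments. Unset Strict Implicit. Unset Printing Implicit Defensive.
Import Order.TTheory GRing.Theory Num.Theory.
Local Open Scope classical_set_scope.
Local Open Scope ring_scope.

Definition is_metric {R : realType} {M : Type} (dist : M -> M -> R) : Prop :=
  (forall x y, dist x y = 0 <-> x = y) /\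
  (forall x y, dist x y = dist y x) /\
  (forall x y z, dist x z <= dist x y + dist y z).

Definition mball {R : realType} {M : Type} (dist : M -> M -> R) (x : M) (r : R)
  : set M := [set y | dist x y < r].

Definition mopen {R : realType} {M : Type} (dist : M -> M -> R) (U : set M) : Prop :=
  forall x, U x -> exists2 r : R, 0 < r & mball dist x r `<=` U.

(* Borel subsets of the metric subspace Y: the sigma-algebra on Y generated
   by the relatively open sets U /\ Y, U open in M. *)
Definition borel_sub {R : realType} {M : Type} (dist : M -> M -> R) (Y : set M)
  : set (set M) :=
  <<s Y, [set U `&` Y | U in mopen dist] >>.

From HB Require Import structures.
From mathcomp Require Import all_boot all_order all_algebra.
From mathcomp Require Import all_classical all_reals all_analysis.
From mathcomp Require Import ring lra measurable_realfun.
Import Order.TTheory GRing.Theory Num.Theory.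
Local Open Scope classical_set_scope.
Local Open Scope ring_scope.

(* At every [eta], [dist xi eta + dist eta y >= dist xi y >= dist x' y / 2],
   so one of the two distances is at least [dist x' y / 4] and the kernel is
   at most [(dist x' y / 4) ^ (- s2) * dist xi eta ^ (- s1)] plus the symmetric
   term.  A single-pole kernel [dist z eta ^ (- s)] integrates over a ball of
   radius [rho] to [O(rho ^ (ups - s))]: summing the Ahlfors bound over the
   dyadic shells around [z] gives a geometric series of ratio
   [2 ^ (s - ups) < 1].  Beyond [r0], the finiteness of [nu Y] extends the
   Ahlfors bound to all radii. *)

Section real_facts.
Context {R : realType}.
Implicit Types a b c l x y e s : R.

Lemma powRN_le_powRN x y s : 0 < x -> x <= y -> 0 <= s -> powR y (- s) <= powR x (- s).
Proof.
move=> x0 xy s0; have y0 : 0 < y := lt_le_trans x0 xy.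
rewrite !powRN lef_pV2 ?posrE ?powR_gt0 //.
by apply: ge0_ler_powR; rewrite // nnegrE ltW.
Qed.

Lemma powRV x e : 0 <= x -> powR x^-1 e = (powR x e)^-1.
Proof.
rewrite le_eqVlt => /predU1P[<-|x0].
  by rewrite invr0; have [->|e0] := eqVneq e 0; rewrite ?powRr0 ?invr1 // powR0 ?invr0.
apply: (@mulfI _ (powR x e)); first by rewrite gt_eqF ?powR_gt0.
by rewrite -powRM ?invr_ge0 ?ltW // mulfV ?gt_eqF // powR1 mulfV // gt_eqF ?powR_gt0.
Qed.

Lemma powR_divN x y e : 0 <= x -> 0 <= y -> powR (x / y) (- e) = powR x (- e) * powR y e.
Proof. by move=> x0 y0; rewrite powRM ?invr_ge0 // powRV // [powR y _]powRN invrK. Qed.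

Lemma powR_lt1 x e : 0 <= x < 1 -> 0 < e -> powR x e < 1.
Proof.
move=> /andP[x0 x1] e0.
by have := @gt0_ltr_powR R e e0 x 1; rewrite powR1; apply; rewrite ?inE /= ?nnegrE.
Qed.

Lemma powR_exprn x e n : 0 <= x -> powR (x ^+ n) e = powR x e ^+ n.
Proof. by move=> x0; rewrite -powR_mulrn // powRAC powR_mulrn // powR_ge0. Qed.

Lemma dyadic_scale_exists x y : 0 < x < y -> exists m, y / 2 ^+ m.+1 <= x < y / 2 ^+ m.
Proof.
move=> /andP[x0 xy].
have [n yn] : exists n, y / 2 ^+ n <= x.
  exists (Num.Def.archi_bound (y / x)).
  rewrite ler_pdivrMr ?exprn_gt0 // -ler_pdivrMl // mulrC.
  apply: (le_trans (ltW (archi_boundP _))); first by rewrite divr_ge0 ?ltW // (lt_trans x0).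
  by rewrite -natrX ler_nat ltnW // ltn_expl.
case: (ex_minnP (ex_intro (fun n => y / 2 ^+ n <= x) n yn)) => m ym mmin.
case: m ym mmin => [|m] ym mmin; first by move: ym; rewrite expr0 divr1 leNgt xy.
by exists m; rewrite ym ltNge; apply/negP => /mmin; rewrite ltnn.
Qed.

Lemma ler_mulD_sum a b x y : 0 <= a -> 0 <= b -> 0 <= x -> 0 <= y ->
  a * x + b * y <= (a + b) * (x + y).
Proof.
move=> a0 b0 x0 y0; have := mulr_ge0 a0 y0; have := mulr_ge0 b0 x0.
rewrite mulrDl !mulrDr; lra.
Qed.

Lemma powR_rescale_le c l a x y (p1 q1 p2 q2 : R) :
  0 <= c -> 0 <= l -> 0 <= a -> 0 <= x -> 0 <= y ->
  c * (powR (x / l) (- p1) * powR (a * y) q1 + powR (x / l) (- p2) * powR (a * y) q2)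
  <= c * (powR l p1 * powR a q1 + powR l p2 * powR a q2)
       * (powR x (- p1) * powR y q1 + powR x (- p2) * powR y q2).
Proof.
move=> c0 l0 a0 x0 y0; rewrite -mulrA ler_wpM2l // !powR_divN ?powRM //.
have -> : powR x (- p1) * powR l p1 * (powR a q1 * powR y q1)
    + powR x (- p2) * powR l p2 * (powR a q2 * powR y q2)
  = powR l p1 * powR a q1 * (powR x (- p1) * powR y q1)
    + powR l p2 * powR a q2 * (powR x (- p2) * powR y q2) by ring.
by apply: ler_mulD_sum; rewrite ?mulr_ge0 ?powR_ge0.
Qed.

End real_facts.

Section ereal_facts.
Context {R : realType}.
Local Open Scope ereal_scope.

Lemma nneseries_ge_cst_pinfty (u : (\bar R)^nat) (c : R) :
  (0 < c)%R -> (forall k, c%:E <= u k) -> \sum_(k <oo) u k = +oo.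
Proof.
move=> c0 cu; apply/eqyP => A A0.
have u0 k : 0 <= u k by apply: le_trans (cu k); rewrite lee_fin ltW.
pose n := Num.Def.archi_bound (A / c).
have An : (A / c < n%:R)%R by apply: archi_boundP; rewrite divr_ge0 // ltW.
apply: le_trans (nneseries_lim_ge n (fun k _ _ => u0 k)).
apply: (@le_trans _ _ (\sum_(0 <= k < n) c%:E)); last exact: lee_sum.
rewrite sumEFin lee_fin big_const_nat subn0 iter_addr addr0 -mulr_natr.
by rewrite -ler_pdivrMl // mulrC ltW.
Qed.

Lemma nneseries_geometric_le (K q : R) : (0 <= K)%R -> (0 < q < 1)%R ->
  \sum_(k <oo) (K * q ^+ k)%:E <= (K / (1 - q))%:E.
Proof.
move=> K0 /andP[q0 q1]; apply: lime_le.
  by apply: is_cvg_ereal_nneg_natsum => n _; rewrite lee_fin mulr_ge0 // exprn_ge0 // ltW.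
apply: nearW => n; rewrite sumEFin lee_fin.
have q1' : (`|q| < 1)%R by rewrite ger0_norm ?ltW.
by move: (geometric_le_lim n K0 q0 q1'); rewrite /series.
Qed.

Lemma inveM_le (p q Q : R) : (0 <= p)%R -> (0 < Q)%R -> (Q <= q)%R ->
  ((p * q)%:E)^-1 <= Q^-1%:E * (p%:E)^-1.
Proof.
move=> p0 Q0 Qq; have q0 : (0 < q)%R := lt_le_trans Q0 Qq.
have [->|pn0] := eqVneq p 0%R.
  by rewrite mul0r inve0 mulry gtr0_sg ?invr_gt0 // mul1e.
rewrite !inver mulf_eq0 (negbTE pn0) (gt_eqF q0) /= -EFinM lee_fin invfM mulrC.
by rewrite ler_wpM2r ?invr_ge0 // lef_pV2.
Qed.

Lemma inve_powR (x s : R) : (0 < x)%R -> ((powR x s)%:E)^-1 = (powR x (- s))%:E.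
Proof. by move=> x0; rewrite inver powR_eq0 (gt_eqF x0) /= powRN. Qed.

(* Whenever [p + q >= 2 t], one of [p], [q] is at least [t]. *)
Lemma inv_powR_mul_le (p q t s1 s2 : R) :
  (0 <= p)%R -> (0 <= q)%R -> (0 < t)%R -> (0 <= s1)%R -> (0 <= s2)%R ->
  (2 * t <= p + q)%R ->
  ((powR p s1 * powR q s2)%:E)^-1 <=
    (powR t (- s2))%:E * ((powR p s1)%:E)^-1 + (powR t (- s1))%:E * ((powR q s2)%:E)^-1.
Proof.
move=> p0 q0 t0 s10 s20 pq.
have [tq|qt] := leP t q.
  apply: le_trans (leeDl _ _); last by rewrite mule_ge0 ?inve_ge0 ?lee_fin ?powR_ge0.
  rewrite powRN; apply: inveM_le; rewrite ?powR_ge0 ?powR_gt0 //.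
  by apply: ge0_ler_powR; rewrite // nnegrE ltW.
apply: le_trans (leeDr _ _); last by rewrite mule_ge0 ?inve_ge0 ?lee_fin ?powR_ge0.
rewrite mulrC powRN; apply: inveM_le; rewrite ?powR_ge0 ?powR_gt0 //.
by apply: ge0_ler_powR; rewrite // ?nnegrE ?(ltW t0) //; lra.
Qed.

End ereal_facts.

Section metric_facts.
Context {R : realType} {M : Type} {dist : M -> M -> R}.
Hypothesis dist_metric : is_metric dist.

Lemma distxx x : dist x x = 0.
Proof. by case: dist_metric => /(_ x x) [_ ->]. Qed.

Lemma distC x y : dist x y = dist y x.
Proof. by case: dist_metric => _ []. Qed.

Lemma dist_triangle x y z : dist x z <= dist x y + dist y z.
Proof. by case: dist_metric => _ []. Qed.

Lemma dist_ge0 x y : 0 <= dist x y.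
Proof.
have := dist_triangle x y x; rewrite distxx (distC y x) => h.
by rewrite -(@pmulr_rge0 _ 2) // mulr2n mulrDl !mul1r.
Qed.

Lemma dist_gt0 x y : x <> y -> 0 < dist x y.
Proof.
move=> xy; rewrite lt_neqAle dist_ge0 andbT eq_sym; apply/eqP => /dist_metric.1.
exact: xy.
Qed.

Lemma mopen_mball x r : mopen dist (mball dist x r).
Proof.
move=> y; rewrite /mball /= => xy; exists (r - dist x y); first by rewrite subr_gt0.
move=> w /=; rewrite /mball /= ltrBrDl => yw.
exact: le_lt_trans (dist_triangle x y w) _.
Qed.

End metric_facts.

(* The integral of a nonnegative function is a supremum over simple
   minorants, so monotonicity needs no measurability. *)
Lemma ge0_le_integral_nonmeasurable (R : realType) (d : measure_display)
    (T : measurableType d) (mu : {measure set T -> \bar R}) (D : set T)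
    (f g : T -> \bar R) :
  (forall x, D x -> 0 <= f x)%E -> (forall x, D x -> f x <= g x)%E ->
  (\int[mu]_(x in D) f x <= \int[mu]_(x in D) g x)%E.
Proof.
move=> f0 fg.
have g0 x : D x -> (0 <= g x)%E by move=> Dx; exact: le_trans (f0 _ Dx) (fg _ Dx).
rewrite (ge0_integralE _ f0) (ge0_integralE _ g0).
apply: ereal_sup_le => _ [h /= hf <-]; exists h => //= x.
apply: le_trans (hf x) _; rewrite /patch; case: ifPn => // /set_mem; exact: fg.
Qed.

(* A measurable majorant of [eta |-> dist z eta ^ (- s)] on [Y] (the kernel
   itself need not be measurable): dyadic shells around [z] plus the bound
   [r ^ (- s)] valid outside [mball z r]. *)
Definition riesz_majorant {R : realType} {M : Type} (dist : M -> M -> R)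
    (Y : set M) (z : M) (r s : R) (eta : M) : \bar R :=
  ((powR r (- s))%:E +
   \sum_(k <oo) (powR (r / 2 ^+ k.+1) (- s))%:E *
                (\1_(mball dist z (r / 2 ^+ k) `&` Y) eta)%:E)%E.

Section riesz_majorant.
Context {R : realType} {M : Type} {dist : M -> M -> R} {Y : set M}.
Hypothesis dist_metric : is_metric dist.
Local Open Scope ereal_scope.

Lemma riesz_term_ge0 z r s eta k :
  0 <= (powR (r / 2 ^+ k.+1) (- s))%:E * (\1_(mball dist z (r / 2 ^+ k) `&` Y) eta)%:E.
Proof. by rewrite mule_ge0 // lee_fin powR_ge0. Qed.

Lemma riesz_majorant_ge0 z r s eta : 0 <= riesz_majorant dist Y z r s eta.
Proof.
by rewrite adde_ge0 ?lee_fin ?powR_ge0 // nneseries_ge0 // => k _ _; exact: riesz_term_ge0.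
Qed.

Lemma riesz_majorant_ge z r s eta : Y eta -> (0 < r)%R -> (0 <= s)%R ->
  ((powR (dist z eta) s)%:E)^-1 <= riesz_majorant dist Y z r s eta.
Proof.
rewrite /riesz_majorant => Yeta r0 s0.
have t0 k : (0 < r / 2 ^+ k)%R by rewrite divr_gt0 // exprn_gt0.
have series0 : 0 <= \sum_(k <oo) (powR (r / 2 ^+ k.+1) (- s))%:E *
    (\1_(mball dist z (r / 2 ^+ k) `&` Y) eta)%:E.
  by rewrite nneseries_ge0 // => k _ _; exact: riesz_term_ge0.
have ind1 k : (dist z eta < r / 2 ^+ k)%R ->
    \1_(mball dist z (r / 2 ^+ k) `&` Y) eta = 1%R :> R.
  by move=> zk; rewrite indicE mem_set.
have [rd|dr] := leP r (dist z eta).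
  apply: le_trans (leeDl _ series0).
  by rewrite inve_powR ?lee_fin ?powRN_le_powRN ?(lt_le_trans r0 rd).
apply: le_trans (leeDr _ _); last by rewrite lee_fin powR_ge0.
have [d0|dpos] := eqVneq (dist z eta) 0%R.
  rewrite (@nneseries_ge_cst_pinfty _ _ (powR r (- s))) ?leey ?powR_gt0 // => k.
  rewrite ind1 ?d0 // mule1 lee_fin powRN_le_powRN //.
  by rewrite ler_pdivrMr ?exprn_gt0 // ler_peMr ?ltW // exprn_egt1 // ltr1n.
have dgt0 : (0 < dist z eta)%R by rewrite lt_neqAle eq_sym dpos dist_ge0.
have [m /andP[dm md]] : exists m, (r / 2 ^+ m.+1 <= dist z eta < r / 2 ^+ m)%R.
  by apply: dyadic_scale_exists; rewrite dgt0 dr.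
apply: le_trans (nneseries_lim_ge m.+1 (fun k _ _ => riesz_term_ge0 z r s eta k)).
rewrite big_nat_recr //= ind1 // mule1.
apply: le_trans (leeDr _ _); last by rewrite sume_ge0 // => k _; exact: riesz_term_ge0.
by rewrite inve_powR // lee_fin powRN_le_powRN.
Qed.

End riesz_majorant.

Section ahlfors_regular.
Context {R : realType} {d : measure_display} {M : measurableType d}.
Context {dist : M -> M -> R} {Y : set M} {nu : {measure set M -> \bar R}}.
Hypothesis dist_metric : is_metric dist.
Hypothesis borel_measurable : borel_sub dist Y `<=` measurable.

Lemma measurable_mballI x r : measurable (mball dist x r `&` Y).
Proof.
by apply: borel_measurable; apply: sub_gen_smallest; exists (mball dist x r) => //;
  exact: mopen_mball.
Qed.

Lemma measurable_dyadic_sum z r s (D : set M) :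
  measurable_fun D (fun eta => \sum_(k <oo) (powR (r / 2 ^+ k.+1) (- s))%:E *
                      (\1_(mball dist z (r / 2 ^+ k) `&` Y) eta)%:E)%E.
Proof.
apply: (ge0_emeasurable_sum (P := xpredT)) => [k x _ _|k _].
  exact: riesz_term_ge0.
apply: measurable_funeM; apply/measurable_EFinP.
by apply: measurable_indic; exact: measurable_mballI.
Qed.

Lemma measurable_riesz_majorant z r s (D : set M) :
  measurable_fun D (riesz_majorant dist Y z r s).
Proof.
rewrite /riesz_majorant; apply: emeasurable_funD; first exact: measurable_cst.
exact: measurable_dyadic_sum.
Qed.

Lemma upper_ahlfors_regular_all_radii (ups : R) (r0 : \bar R) (c0 : R) :
  measurable Y -> 0 < ups -> (0 < r0)%E -> 0 < c0 ->
  (forall x r, Y x -> 0 < r -> (r%:E < r0)%E ->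
     (nu (mball dist x r `&` Y) <= (c0 * powR r ups)%:E)%E) ->
  ((r0 < +oo)%E -> (nu Y < +oo)%E) ->
  exists2 C : R, 0 < C & forall x r, Y x -> 0 < r ->
     (nu (mball dist x r `&` Y) <= (C * powR r ups)%:E)%E.
Proof.
move=> mY ups0 r00 c00 ahlfors nuY_fin.
case: r0 r00 ahlfors nuY_fin => [r0 + ahlfors nuY_fin | _ ahlfors _ | //]; last first.
  by exists c0 => // x r Yx r0; apply: ahlfors; rewrite ?ltry.
rewrite lte_fin => r00.
have nuY_ge0 : (0 <= nu Y)%E := measure_ge0 nu Y.
have nuYE : nu Y = (fine (nu Y))%:E by rewrite fineK // ge0_fin_numE // nuY_fin // ltry.
have r0ups : 0 < powR r0 ups by rewrite powR_gt0.
(* For [r >= r0], [nu Y <= (nu Y / r0 ^ ups) * r ^ ups]. *)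
exists (c0 + fine (nu Y) / powR r0 ups).
  by rewrite ltr_pwDl // divr_ge0 ?fine_ge0 // ltW.
move=> x r Yx r_gt0; have rups : 0 < powR r ups by rewrite powR_gt0.
have [rr0|r0r] := ltP r r0.
  apply: le_trans (ahlfors _ _ Yx r_gt0 _) _; first by rewrite lte_fin.
  by rewrite lee_fin ler_pM2r // lerDl divr_ge0 ?fine_ge0 // ltW.
apply: (@le_trans _ _ (nu Y)).
  by apply: le_measure; rewrite ?inE //; exact: measurable_mballI.
rewrite nuYE lee_fin mulrDl; apply: ler_wpDl; first by rewrite mulr_ge0 // ltW.
rewrite -mulrA ler_peMr ?fine_ge0 // ler_pdivlMl // mulr1.
by rewrite ge0_ler_powR // ?ltW // nnegrE ltW // (lt_le_trans r00).
Qed.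

Section riesz_integrals.
Variables (ups C : R).
Hypothesis C_gt0 : 0 < C.
Hypothesis ahlfors : forall x r, Y x -> 0 < r ->
  (nu (mball dist x r `&` Y) <= (C * powR r ups)%:E)%E.

Lemma integral_riesz_term_le z (D : set M) r s k : Y z -> measurable D -> 0 < r ->
  (\int[nu]_(eta in D) ((powR (r / 2 ^+ k.+1) (- s))%:E *
                        (\1_(mball dist z (r / 2 ^+ k) `&` Y) eta)%:E)
   <= (C * powR 2 s * powR r (ups - s) * powR 2^-1 (ups - s) ^+ k)%:E)%E.
Proof.
move=> Yz mD r0; set t := r / 2 ^+ k.
have t0 : 0 < t by rewrite divr_gt0 // exprn_gt0.
have mB := measurable_mballI z t.
have -> : r / 2 ^+ k.+1 = t / 2 by rewrite exprSr invfM mulrA.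
rewrite ge0_integralZl_EFin ?powR_ge0 // ?integral_indic //; last first.
  by apply/measurable_EFinP; exact: measurable_indic.
apply: le_trans (_ : _ <= (powR (t / 2) (- s) * (C * powR t ups))%:E)%E _.
  rewrite EFinM; apply: lee_wpmul2l; first by rewrite lee_fin powR_ge0.
  apply: (@le_trans _ _ (nu (mball dist z t `&` Y))); last exact: ahlfors.
  by apply: le_measure; rewrite ?inE //; exact: measurableI.
have tE : powR t (- s) * powR t ups = powR r (ups - s) * powR 2^-1 (ups - s) ^+ k.
  rewrite -powRD; last by rewrite implybE (gt_eqF t0) orbT.
  by rewrite addrC /t powRM ?invr_ge0 ?exprn_ge0 ?(ltW r0) // -exprVn powR_exprn ?invr_ge0.
rewrite lee_fin powR_divN ?(ltW t0) //.
have -> : powR t (- s) * powR 2 s * (C * powR t ups) =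
  C * powR 2 s * (powR t (- s) * powR t ups) by ring.
by rewrite tE mulrA.
Qed.

Lemma integral_riesz_majorant_le s : 0 <= s < ups ->
  exists2 K : R, 0 < K & forall z x r, Y z -> Y x -> 0 < r ->
    (\int[nu]_(eta in Y `&` mball dist x r) riesz_majorant dist Y z r s eta
     <= (K * powR r (ups - s))%:E)%E.
Proof.
move=> /andP[s0 sups]; set q := powR 2^-1 (ups - s).
have q0 : 0 < q by rewrite powR_gt0.
have q1 : q < 1.
  by apply: powR_lt1; rewrite ?subr_gt0 // invr_ge0 ler0n invf_lt1 ?ltr1n.
have K'0 : 0 < C * powR 2 s / (1 - q) by rewrite !mulr_gt0 ?powR_gt0 ?invr_gt0 ?subr_gt0.
exists (C + C * powR 2 s / (1 - q)); first exact: addr_gt0.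
move=> z x r Yz Yx r0; set D := Y `&` mball dist x r.
have mD : measurable D by rewrite /D setIC; exact: measurable_mballI.
rewrite /riesz_majorant ge0_integralD //; last 3 first.
- by move=> eta _; rewrite lee_fin powR_ge0.
- by move=> eta _; rewrite nneseries_ge0 // => k _ _; exact: riesz_term_ge0.
- exact: measurable_dyadic_sum.
rewrite mulrDl EFinD; apply: leeD.
  have -> : C * powR r (ups - s) = powR r (- s) * (C * powR r ups).
    by rewrite mulrCA -powRD ?(addrC (- s)) // implybE (gt_eqF r0) orbT.
  rewrite (integral_cst _ mD) EFinM; apply: lee_wpmul2l; first by rewrite lee_fin powR_ge0.
  apply: (@le_trans _ _ (nu (mball dist x r `&` Y))); last exact: ahlfors.
  by rewrite /D setIC.
rewrite integral_nneseries //; last 2 first.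
- move=> k; apply: measurable_funeM; apply/measurable_EFinP.
  by apply: measurable_indic; exact: measurable_mballI.
- by move=> k eta _; exact: riesz_term_ge0.
apply: (@le_trans _ _ (\sum_(k <oo) (C * powR 2 s * powR r (ups - s) * q ^+ k)%:E)%E).
  apply: lee_nneseries => [k _ _|k _]; last exact: integral_riesz_term_le.
  by rewrite integral_ge0 // => eta _; exact: riesz_term_ge0.
rewrite [X in (_ <= X%:E)%E]mulrAC; apply: nneseries_geometric_le; last by rewrite q0 q1.
by rewrite !mulr_ge0 ?powR_ge0 // ltW.
Qed.

Lemma integral_two_pole_le s1 s2 : 0 <= s1 < ups -> 0 <= s2 < ups ->
  exists2 c : R, 0 < c & forall xi y t rho, Y xi -> Y y -> 0 < t -> 0 < rho ->
    2 * t <= dist xi y ->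
    (\int[nu]_(eta in Y `&` mball dist xi rho)
        ((powR (dist xi eta) s1 * powR (dist eta y) s2)%:E)^-1
     <= (c * (powR t (- s2) * powR rho (ups - s1)
              + powR t (- s1) * powR rho (ups - s2)))%:E)%E.
Proof.
move=> s1P s2P; have /andP[s10 _] := s1P; have /andP[s20 _] := s2P.
have [K1 K10 int1] := integral_riesz_majorant_le _ s1P.
have [K2 K20 int2] := integral_riesz_majorant_le _ s2P.
exists (K1 + K2); first exact: addr_gt0.
move=> xi y t rho Yxi Yy t0 rho0 txy; set D := Y `&` mball dist xi rho.
have mD : measurable D by rewrite /D setIC; exact: measurable_mballI.
set A := powR t (- s2); set B := powR t (- s1).
have A0 : 0 <= A := powR_ge0 _ _; have B0 : 0 <= B := powR_ge0 _ _.
apply: (@le_trans _ _ (\int[nu]_(eta in D) (A%:E * riesz_majorant dist Y xi rho s1 eta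
                                  + B%:E * riesz_majorant dist Y y rho s2 eta))%E).
  apply: ge0_le_integral_nonmeasurable => [eta _|eta [Yeta _]].
    by rewrite inve_ge0 lee_fin mulr_ge0 ?powR_ge0.
  apply: le_trans (inv_powR_mul_le _ _ _ s1 s2 (dist_ge0 dist_metric _ _)
    (dist_ge0 dist_metric _ _) t0 s10 s20 (le_trans txy (dist_triangle dist_metric _ eta _))) _.
  apply: leeD; apply: lee_wpmul2l; rewrite ?lee_fin //.
    exact: (riesz_majorant_ge dist_metric).
  by rewrite (distC dist_metric); exact: (riesz_majorant_ge dist_metric).
have maj_ge0 z r s eta : (0 <= riesz_majorant dist Y z r s eta)%E.
  exact: riesz_majorant_ge0.
rewrite ge0_integralD //; last 4 first.
- by move=> eta _; rewrite mule_ge0 ?lee_fin.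
- exact/measurable_funeM/measurable_riesz_majorant.
- by move=> eta _; rewrite mule_ge0 ?lee_fin.
- exact/measurable_funeM/measurable_riesz_majorant.
rewrite !ge0_integralZl_EFin //; try exact: measurable_riesz_majorant.
apply: (@le_trans _ _
    ((A * (K1 * powR rho (ups - s1)) + B * (K2 * powR rho (ups - s2)))%:E)).
  rewrite EFinD !EFinM; apply: leeD; apply: lee_wpmul2l; rewrite ?lee_fin //.
    exact: int1.
  exact: int2.
rewrite lee_fin -/A -/B mulrCA [B * _]mulrCA.
by apply: ler_mulD_sum; rewrite ?mulr_ge0 ?powR_ge0 // ltW.
Qed.

End riesz_integrals.

End ahlfors_regular.

Theorem lemma4p5 (R : realType) (d0 : measure_display) (M : measurableType d0)
  (dist : M -> M -> R) (Y : set M) (nu : {measure set M -> \bar R})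
  (upsY : R) (r0 : \bar R) (c0 : R) (s1 s2 a : R) :
  is_metric dist ->
  measurable Y ->
  borel_sub dist Y `<=` measurable ->
  (forall x r, Y x -> 0 < r -> (nu (mball dist x r `&` Y) < +oo)%E) ->
  0 < upsY ->
  (0 < r0)%E -> 0 < c0 ->
  (forall x r, Y x -> 0 < r -> (r%:E < r0)%E ->
     (nu (mball dist x r `&` Y) <= (c0 * powR r upsY)%:E)%E) ->
  ((r0 < +oo)%E -> (nu Y < +oo)%E) ->
  0 <= s1 < upsY -> 0 <= s2 < upsY -> 0 < a ->
  exists2 c : R, 0 < c &
    forall x' x'' xi y, Y x' -> Y x'' -> x' <> x'' -> (xi = x' \/ xi = x'') ->
      Y y -> ~ mball dist x' (2 * dist x' x'') y ->
      (\int[nu]_(eta in Y `&` mball dist xi (a * dist x' x''))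
          (((powR (dist xi eta) s1 * powR (dist eta y) s2)%:E)^-1)
       <= (c * (powR (dist x' y) (- s2) * powR (dist x' x'') (upsY - s1)
              + powR (dist x' y) (- s1) * powR (dist x' x'') (upsY - s2)))%:E)%E.
Proof.
(* Finiteness of [nu] on balls is implied by the Ahlfors bound for all radii. *)
move=> dist_metric mY borel _ ups0 r00 c00 ahlfors nuY_fin s1P s2P a0.
have [C C0 ahlforsC] := upper_ahlfors_regular_all_radii dist_metric borel
  _ _ _ mY ups0 r00 c00 ahlfors nuY_fin.
have [c c_gt0 two_pole] := integral_two_pole_le dist_metric borel _ _ C0 ahlforsC _ _ s1P s2P.
exists (c * (powR 4 s2 * powR a (upsY - s1) + powR 4 s1 * powR a (upsY - s2))).
  by rewrite mulr_gt0 ?addr_gt0 ?mulr_gt0 ?powR_gt0.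
move=> x' x'' xi y Yx' Yx'' x'x'' xiE Yy.
set D0 := dist x' x''; set del := dist x' y.
move=> /negP; rewrite -leNgt -/del => far.
have D0_gt0 : 0 < D0 := dist_gt0 dist_metric _ _ x'x''.
have Yxi : Y xi by case: xiE => ->.
have xi_near : dist x' xi <= D0 by case: xiE => ->; rewrite ?distxx ?dist_ge0.
have t_le : 2 * (del / 4) <= dist xi y.
  by have := dist_triangle dist_metric x' xi y; rewrite -/del; lra.
have del_gt0 : 0 < del by lra.
apply: le_trans (two_pole xi y (del / 4) (a * D0) Yxi Yy _ _ t_le) _; first lra.
  exact: mulr_gt0.
by rewrite lee_fin; apply: powR_rescale_le; rewrite ?ltW.
Qed.
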